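(* Let $\mathcal M=(M,<,+,0,\ldots)$ be a definably complete locally o-minimal expansion of an ordered abelian group. Let $C\subseteq M^m$ be a definable, closed and bounded set, let $s\in M$ with $s>0$, and let $\{f_t:C\to M\}_{0<t<s}$ be a definable family of functions which is pointwise convergent and is a definable family of equi-continuous functions. Then the family $\{f_t\}_{0<t<s}$ is uniformly convergent.
   Context: ''Definable'' means definable in $\mathcal M$ with parameters. $\mathcal M$ is definably complete if every definable subset of $M$ has a supremum and an infimum in $M\cup\{\pm\infty\}$; it is locally o-minimal if for every definable $X\subseteq M$ and every $a\in M$ there is an open interval $I\ni a$ such that $X\cap I$ is a finite union of points and open intervals. For $x=(x_1,\dots,x_n)\in M^n$, $|x|:=\max_i |x_i|$; $M^n$ carries the product of the order topology. A definable family of functions $\{f_t:C\to M\}_{0<t<s}$ means there is a definable $F:C\times(0,s)\to M$ with $f_t(x)=F(x,t)$. It is a family of equi-continuous functions if for all $\varepsilon>0$ and all $x\in C$ there is $\delta>0$ such that for all $t\in(0,s)$ and all $x'\in C$ with $|x-x'|<\delta$ we have $|F(x,t)-F(x',t)|<\varepsilon$. It is pointwise convergent if for every $\varepsilon>0$ and $x\in C$ there is $s'>0$ with $|f_t(x)-f_{t'}(x)|<\varepsilon$ for all $t,t'\in(0,s')$. It is uniformly convergent if for every $\varepsilon>0$ there is $s'>0$ with $|f_t(x)-f_{t'}(x)|<\varepsilon$ for all $x\in C$ and all $t,t'\in(0,s')$. *)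

From mathcomp Require Import all_boot all_algebra.
Set Implicit Arguments. Unset Strict Implicit. Unset Printing Implicit Defensive.
Import GRing.Theory.
Local Open Scope ring_scope.

Definition ordered_abelian_group (M : zmodType) (lt : M -> M -> Prop) : Prop :=
  [/\ (forall x, ~ lt x x),
      (forall x y z, lt x y -> lt y z -> lt x z),
      (forall x y, [\/ lt x y, x = y | lt y x]) &
      (forall x y z, lt x y -> lt (x + z) (y + z))].

Definition le_of (M : zmodType) (lt : M -> M -> Prop) (x y : M) : Prop :=
  lt x y \/ x = y.

Definition abs_lt (M : zmodType) (lt : M -> M -> Prop) (x e : M) : Prop :=
  lt x e /\ lt (- x) e.

(* |x| < e for x in M^n, where |x| = max_i |x_i| *)
Definition vabs_lt (M : zmodType) (lt : M -> M -> Prop) (n : nat)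
  (x : 'I_n -> M) (e : M) : Prop := forall i, abs_lt lt (x i) e.

(* Extra (non-logical) symbols of the expansion, beyond <, +, 0. *)
Record language := Language {
  fsym : Type; farity : fsym -> nat;
  rsym : Type; rarity : rsym -> nat }.

Record interp (L : language) (M : Type) := Interp {
  ifun : forall f : fsym L, ('I_(farity f) -> M) -> M;
  irel : forall r : rsym L, ('I_(rarity r) -> M) -> Prop }.

Inductive term (L : language) : Type :=
  | TVar : nat -> term L
  | TZero : term L
  | TAdd : term L -> term L -> term L
  | TApp : forall f : fsym L, ('I_(farity f) -> term L) -> term L.

Inductive formula (L : language) : Type :=
  | FEq : term L -> term L -> formula L
  | FLt : term L -> term L -> formula L
  | FRel : forall r : rsym L, ('I_(rarity r) -> term L) -> formula L
  | FNot : formula L -> formula L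
  | FAnd : formula L -> formula L -> formula L
  | FEx : nat -> formula L -> formula L.

Section Semantics.
Variables (L : language) (M : zmodType) (lt : M -> M -> Prop) (I : interp L M).

Fixpoint teval (v : nat -> M) (t : term L) : M :=
  match t with
  | TVar i => v i
  | TZero => 0
  | TAdd t1 t2 => teval v t1 + teval v t2
  | TApp f ts => ifun I (fun j => teval v (ts j))
  end.

Definition upd (v : nat -> M) (i : nat) (a : M) : nat -> M :=
  fun j => if j == i then a else v j.

Fixpoint sat (v : nat -> M) (phi : formula L) : Prop :=
  match phi with
  | FEq t1 t2 => teval v t1 = teval v t2
  | FLt t1 t2 => lt (teval v t1) (teval v t2)
  | FRel r ts => irel I (fun j => teval v (ts j))
  | FNot p => ~ sat v p
  | FAnd p q => sat v p /\ sat v q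
  | FEx i p => exists a, sat (upd v i a) p
  end.

(* environment: variables 0..n-1 get x, variables n..n+k-1 get parameters p *)
Definition env (n k : nat) (x : 'I_n -> M) (p : 'I_k -> M) : nat -> M :=
  fun i => match insub i with
           | Some j => x j
           | None => oapp p 0 (insub (i - n)%N)
           end.

Definition definable (n : nat) (X : ('I_n -> M) -> Prop) : Prop :=
  exists (phi : formula L) (k : nat) (p : 'I_k -> M),
    forall x, X x <-> sat (env x p) phi.

Definition definable1 (X : M -> Prop) : Prop :=
  definable (fun v : 'I_1 -> M => X (v ord0)).

(* open interval with endpoints in M ∪ {±∞}; None = -∞ (lower) / +∞ (upper) *)
Definition in_oint (l u : option M) (x : M) : Prop :=
  (if l is Some b then lt b x else True) /\ (if u is Some c then lt x c else True).

Definition is_lub (X : M -> Prop) (u : M) : Prop :=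
  (forall x, X x -> le_of lt x u) /\
  (forall b, (forall x, X x -> le_of lt x b) -> le_of lt u b).
Definition is_glb (X : M -> Prop) (u : M) : Prop :=
  (forall x, X x -> le_of lt u x) /\
  (forall b, (forall x, X x -> le_of lt b x) -> le_of lt b u).

(* sup X exists in M ∪ {±∞}: -∞ if X = ∅, +∞ if X has no upper bound in M *)
Definition has_sup_ext (X : M -> Prop) : Prop :=
  (forall x, ~ X x) \/ (forall b, exists x, X x /\ lt b x) \/ (exists u, is_lub X u).
Definition has_inf_ext (X : M -> Prop) : Prop :=
  (forall x, ~ X x) \/ (forall b, exists x, X x /\ lt x b) \/ (exists u, is_glb X u).

Definition definably_complete : Prop :=
  forall X : M -> Prop, definable1 X -> has_sup_ext X /\ has_inf_ext X.

Inductive piece := Pt of M | Oint of option M & option M.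
Definition in_piece (q : piece) (x : M) : Prop :=
  match q with Pt a => x = a | Oint l u => in_oint l u x end.

Definition locally_o_minimal : Prop :=
  forall X : M -> Prop, definable1 X -> forall a : M,
    exists l u : option M, in_oint l u a /\
      exists s : seq piece, forall x,
        (X x /\ in_oint l u x) <-> (exists2 i, (i < size s)%N & in_piece (nth (Pt 0) s i) x).


Definition closed_set (n : nat) (C : ('I_n -> M) -> Prop) : Prop :=
  forall x, ~ C x -> exists l u : 'I_n -> option M,
    (forall i, in_oint (l i) (u i) (x i)) /\
    (forall y, (forall i, in_oint (l i) (u i) (y i)) -> ~ C y).

Definition bounded_set (n : nat) (C : ('I_n -> M) -> Prop) : Prop :=
  exists R : M, forall x, C x -> forall i, le_of lt (x i) R /\ le_of lt (- x i) R.

Definition definable_family (m : nat) (C : ('I_m -> M) -> Prop) (s : M)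
  (F : ('I_m -> M) -> M -> M) : Prop :=
  definable (fun z : 'I_(m + 2) -> M =>
    let x := fun i => z (lshift 2 i) in
    let t := z (rshift m (ord0 : 'I_2)) in
    let y := z (rshift m (ord_max : 'I_2)) in
    [/\ C x, lt 0 t, lt t s & y = F x t]).

Definition equicontinuous_family (m : nat) (C : ('I_m -> M) -> Prop) (s : M)
  (F : ('I_m -> M) -> M -> M) : Prop :=
  forall eps, lt 0 eps -> forall x, C x -> exists delta, lt 0 delta /\
    forall t x', lt 0 t -> lt t s -> C x' -> vabs_lt lt (fun i => x i - x' i) delta ->
      abs_lt lt (F x t - F x' t) eps.

Definition pointwise_convergent (m : nat) (C : ('I_m -> M) -> Prop) (s : M)
  (F : ('I_m -> M) -> M -> M) : Prop :=
  forall eps, lt 0 eps -> forall x, C x -> exists s', lt 0 s' /\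
    forall t t', lt 0 t -> lt t s' -> lt t s -> lt 0 t' -> lt t' s' -> lt t' s ->
      abs_lt lt (F x t - F x t') eps.

Definition uniformly_convergent (m : nat) (C : ('I_m -> M) -> Prop) (s : M)
  (F : ('I_m -> M) -> M -> M) : Prop :=
  forall eps, lt 0 eps -> exists s', lt 0 s' /\
    forall x t t', C x -> lt 0 t -> lt t s' -> lt t s -> lt 0 t' -> lt t' s' -> lt t' s ->
      abs_lt lt (F x t - F x t') eps.

End Semantics.

(* Suppose the family f_t = F(., t), 0 < t < s, were not uniformly convergent
   for some eps.  For r > 0 let B_r be the set of "bad" points x of C at which
   |F x t - F x t'| >= eps for some t, t' in (0, min(r, s)).  Every B_r is
   nonempty, the family (B_r)_r increases with r, is bounded, and it is
   definable.  Definable completeness yields a point c such that every B_r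
   contains points arbitrarily close to c: coordinate after coordinate, c_k is
   the supremum of the numbers lying below the k-th coordinates of all points
   of some B_r.  Since C is closed, c lies in C.  But equicontinuity at c
   together with pointwise convergence at c give a neighbourhood of c and an
   r > 0 on which the oscillation of the family stays below eps, so B_r has no
   point near c: a contradiction. *)
From mathcomp Require Import all_boot all_algebra.
From Stdlib Require Import FunctionalExtensionality Classical.
Set Implicit Arguments. Unset Strict Implicit. Unset Printing Implicit Defensive.
Import GRing.Theory.
From mathcomp Require Import zify.
Local Open Scope ring_scope.

Section OrderedGroup.
Variables (M : zmodType) (lt : M -> M -> Prop).
Hypothesis HM : ordered_abelian_group lt.
Local Notation le := (le_of lt).

Lemma ltxx x : ~ lt x x. Proof. by case: HM. Qed.
Lemma lt_trans x y z : lt x y -> lt y z -> lt x z.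
Proof. by case: HM => _ h _ _; apply: h. Qed.
Lemma trichotomy x y : [\/ lt x y, x = y | lt y x].
Proof. by case: HM => _ _ h _; apply: h. Qed.
Lemma ltDr x y z : lt x y -> lt (x + z) (y + z).
Proof. by case: HM => _ _ _ h; apply: h. Qed.
Lemma ltDl x y z : lt x y -> lt (z + x) (z + y).
Proof. by move=> h; rewrite ![z + _]addrC; apply: ltDr. Qed.
Lemma ltDr_iff x y z : lt (x + z) (y + z) <-> lt x y.
Proof. split; last exact: ltDr. by move=> /(ltDr (- z)); rewrite !addrK. Qed.

Lemma lt_le_trans x y z : lt x y -> le y z -> lt x z.
Proof. by move=> h [h'|<-] //; apply: lt_trans h h'. Qed.
Lemma le_trans x y z : le x y -> le y z -> le x z.
Proof. by move=> [h|->] // h'; left; apply: lt_le_trans h h'. Qed.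
Lemma not_lt x y : ~ lt x y -> le y x.
Proof. by case: (trichotomy x y) => [h|->|h] n; [case: n|right|left]. Qed.
Lemma lt_not_le x y : lt x y -> ~ le y x.
Proof.
move=> h [h'|e]; first by apply: (@ltxx x); apply: lt_trans h h'.
by subst; apply: (ltxx h).
Qed.

Lemma lt_opp x y : lt x y -> lt (- y) (- x).
Proof.
move=> /(ltDr (- x - y)).
have -> : x + (- x - y) = - y by rewrite addrA addrN add0r.
by rewrite addrC subrK.
Qed.
Lemma le_opp x y : le x y -> le (- y) (- x).
Proof. by move=> [h|->]; [left; apply: lt_opp|right]. Qed.
Lemma lt_add2 a b c d : lt a b -> lt c d -> lt (a + c) (b + d).
Proof. by move=> h1 h2; apply: lt_trans (ltDr c h1) (ltDl b h2). Qed.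
Lemma le_add2 a b c d : le a b -> le c d -> le (a + c) (b + d).
Proof.
move=> [h1|->] [h2|->]; last by right.
- by left; apply: lt_add2.
- by left; apply: ltDr.
- by left; apply: ltDl.
Qed.
Lemma lt_subr x y : lt 0 (y - x) <-> lt x y.
Proof. by rewrite -(ltDr_iff _ _ x) add0r subrK. Qed.

Lemma ex_min_pos a b : lt 0 a -> lt 0 b -> exists c, lt 0 c /\ le c a /\ le c b.
Proof.
move=> ha hb; case: (trichotomy a b) => [h|->|h].
- by exists a; split; [|split; [right|left]].
- by exists b; split; [|split; right].
- by exists b; split; [|split; [left|right]].
Qed.

Lemma abs_lt_le x e e' : abs_lt lt x e -> le e e' -> abs_lt lt x e'.
Proof. by move=> [h1 h2] h; split; apply: lt_le_trans h. Qed.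
Lemma abs_lt_sub x y e : abs_lt lt (x - y) e <-> abs_lt lt (y - x) e.
Proof. by rewrite /abs_lt !opprB; tauto. Qed.
Lemma abs_lt_iff a c r : abs_lt lt (a - c) r <-> lt a (r + c) /\ lt c (r + a).
Proof.
by rewrite /abs_lt -(ltDr_iff _ _ c) subrK -(ltDr_iff (- (a - c)) _ a) opprB subrK.
Qed.

(* The "eps/2" argument.  The group need not be divisible nor dense: when no
   element lies strictly between 0 and eps, only 0 has norm below eps. *)
Lemma abs_lt_split2 eps : lt 0 eps -> exists e, lt 0 e /\
  forall a b, abs_lt lt a e -> abs_lt lt b e -> abs_lt lt (a + b) eps.
Proof.
move=> he.
have small_sum e : le (e + e) eps -> forall a b,
    abs_lt lt a e -> abs_lt lt b e -> abs_lt lt (a + b) eps.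
  move=> hle a b [ha1 ha2] [hb1 hb2]; split.
    by apply: lt_le_trans (lt_add2 ha1 hb1) hle.
  by rewrite opprD; apply: lt_le_trans (lt_add2 ha2 hb2) hle.
case: (classic (exists d, lt 0 d /\ lt d eps)) => [[d [hd0 hd]]|no_mid].
  case: (classic (le (d + d) eps)) => hdd; first by exists d; split => //; apply: small_sum.
  have hed : lt 0 (eps - d) by apply/lt_subr.
  case: (ex_min_pos hd0 hed) => e [he0 [h1 h2]].
  exists e; split => //; apply: small_sum.
  by apply: (le_trans (le_add2 h1 h2)); rewrite addrC subrK; right.
have only0 x : abs_lt lt x eps -> x = 0.
  move=> [h1 h2]; case: (trichotomy x 0) => [h|//|h]; case: no_mid.
    by exists (- x); split => //; rewrite -oppr0; apply: lt_opp.
  by exists x.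
exists eps; split => // a b ha hb.
by rewrite (only0 a ha) (only0 b hb) addr0; split; rewrite ?oppr0.
Qed.

Lemma abs_lt_split3 eps : lt 0 eps -> exists e, lt 0 e /\
  forall a b c, abs_lt lt a e -> abs_lt lt b e -> abs_lt lt c e ->
    abs_lt lt (a + b + c) eps.
Proof.
move=> he; case: (abs_lt_split2 he) => e1 [he1 H1].
case: (abs_lt_split2 he1) => e2 [he2 H2].
case: (ex_min_pos he1 he2) => e [he0 [h1 h2]].
exists e; split => // a b c ha hb hc; apply: H1; last exact: abs_lt_le hc h1.
by apply: H2; apply: abs_lt_le h2.
Qed.

Section Neighbourhoods.

Lemma oint_ball (d0 : M) (l u : option M) (a : M) : lt 0 d0 ->
  in_oint lt l u a -> exists d, lt 0 d /\ forall d', le d' d ->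
    forall y, abs_lt lt (y - a) d' -> in_oint lt l u y.
Proof.
move=> hd0 [hl hu].
have [d1 [hd1 H1]] : exists d1, lt 0 d1 /\ forall d', le d' d1 ->
    forall y, abs_lt lt (y - a) d' -> (if l is Some b then lt b y else True).
  case: l hl => [b|] hb; last by exists d0.
  exists (a - b); split; first by apply/lt_subr.
  move=> d' hle y /abs_lt_iff [_ h].
  have := lt_le_trans h (le_add2 hle (or_intror (erefl y))).
  move/(ltDr (b - a)).
  have -> : a + (b - a) = b by rewrite addrC subrK.
  by rewrite [a - b + y]addrC -addrA [X in y + X]addrA subrK subrr addr0.
have [d2 [hd2 H2]] : exists d2, lt 0 d2 /\ forall d', le d' d2 ->
    forall y, abs_lt lt (y - a) d' -> (if u is Some b then lt y b else True).
  case: u hu => [b|] hb; last by exists d0.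
  exists (b - a); split; first by apply/lt_subr.
  move=> d' hle y /abs_lt_iff [h _].
  by have := lt_le_trans h (le_add2 hle (or_intror (erefl a))); rewrite subrK.
case: (ex_min_pos hd1 hd2) => d [hd [h1 h2]].
exists d; split => // d' hle y hy; split.
  by apply: H1 hy; exact: le_trans hle h1.
by apply: H2 hy; exact: le_trans hle h2.
Qed.

Lemma finite_common_radius (d0 : M) n (P : 'I_n -> M -> Prop) : lt 0 d0 ->
  (forall i, exists d, lt 0 d /\ forall d', le d' d -> P i d') ->
  exists d, lt 0 d /\ forall i, P i d.
Proof.
move=> hd0 H.
suff [d [hd Hd]] : exists d, lt 0 d /\ forall d', le d' d ->
    forall i, i \in ord_enum n -> P i d'.
  by exists d; split => // i; apply: Hd; [right|rewrite mem_ord_enum].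
elim: (ord_enum n) => [|i sq [d [hd Hd]]]; first by exists d0.
case: (H i) => di [hdi Hdi].
case: (ex_min_pos hd hdi) => e [he [h1 h2]].
exists e; split => // d' hle j; rewrite in_cons => /orP [/eqP ->|hj].
  by apply: Hdi; exact: le_trans hle h2.
by apply: Hd => //; exact: le_trans hle h1.
Qed.

Lemma closed_cluster_point m (C : ('I_m -> M) -> Prop) (c : 'I_m -> M) (d0 : M) :
  closed_set lt C -> lt 0 d0 ->
  (forall r, lt 0 r -> exists x, C x /\ forall i, abs_lt lt (x i - c i) r) -> C c.
Proof.
move=> HC hd0 Hc; apply: NNPP => nCc.
case: (HC c nCc) => l [u [Hin Hout]].
have [d [hd Hd]] := finite_common_radius
  (P := fun i d => forall y, abs_lt lt (y - c i) d -> in_oint lt (l i) (u i) y) hd0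
  (fun i => oint_ball hd0 (Hin i)).
case: (Hc d hd) => x [Cx Hx].
by apply: (Hout x) => // i; apply: Hd.
Qed.

Definition in_window (s r t : M) : Prop := [/\ lt 0 t, lt t r & lt t s].

Lemma local_uniform_convergence m (C : ('I_m -> M) -> Prop) (s : M)
    (F : ('I_m -> M) -> M -> M) (eps : M) (c : 'I_m -> M) :
  pointwise_convergent lt C s F -> equicontinuous_family lt C s F ->
  lt 0 eps -> C c ->
  exists r, lt 0 r /\ forall x t t', C x -> (forall i, abs_lt lt (x i - c i) r) ->
    in_window s r t -> in_window s r t' -> abs_lt lt (F x t - F x t') eps.
Proof.
move=> Hpc Heq heps Cc.
have [e [he He]] := abs_lt_split3 heps.
have [delta [hdelta Hdelta]] := Heq e he c Cc.
have [s0 [hs0 Hs0]] := Hpc e he c Cc.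
have [r [hr [hrs0 hrdelta]]] := ex_min_pos hs0 hdelta.
exists r; split => // x t t' Cx Hx [ht1 ht2 ht3] [ht1' ht2' ht3'].
have near_c : vabs_lt lt (fun i => c i - x i) delta.
  by move=> i /=; apply: abs_lt_le hrdelta; apply/abs_lt_sub.
have -> : F x t - F x t' = (F x t - F c t) + (F c t - F c t') + (F c t' - F x t').
  by rewrite (addrA (F x t - F c t)) subrK (addrA (F x t - F c t')) subrK.
apply: He; first by apply/abs_lt_sub; apply: Hdelta.
  by apply: Hs0 => //; apply: lt_le_trans hrs0.
exact: Hdelta.
Qed.

End Neighbourhoods.

Section Definability.
Variables (L : language) (I : interp L M).

Fixpoint term_rename (r : nat -> nat) (t : term L) : term L :=
  match t with
  | TVar i => TVar L (r i)
  | TZero => TZero L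
  | TAdd a b => TAdd (term_rename r a) (term_rename r b)
  | @TApp _ f ts => @TApp L f (fun j => term_rename r (ts j))
  end.

Fixpoint formula_rename (r : nat -> nat) (phi : formula L) : formula L :=
  match phi with
  | FEq a b => FEq (term_rename r a) (term_rename r b)
  | FLt a b => FLt (term_rename r a) (term_rename r b)
  | @FRel _ R ts => @FRel L R (fun j => term_rename r (ts j))
  | FNot p => FNot (formula_rename r p)
  | FAnd p q => FAnd (formula_rename r p) (formula_rename r q)
  | FEx i p => FEx (r i) (formula_rename r p)
  end.

Lemma teval_rename r v t : teval I v (term_rename r t) = teval I (v \o r) t.
Proof.
elim: t => //= [a IHa b IHb|f ts IH]; first by rewrite IHa IHb.
by congr (ifun I _); apply: functional_extensionality => j; rewrite IH.
Qed.

(* Substitution lemma for injective renamings (injectivity keeps the bound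
   variables of existential quantifiers apart). *)
Lemma sat_rename r : injective r -> forall phi v,
  sat lt I v (formula_rename r phi) <-> sat lt I (v \o r) phi.
Proof.
move=> inj_r; elim=> /=.
- by move=> a b v; rewrite !teval_rename.
- by move=> a b v; rewrite !teval_rename.
- move=> R ts v.
  suff -> : (fun j => teval I v (term_rename r (ts j))) =
            (fun j => teval I (v \o r) (ts j)) by [].
  by apply: functional_extensionality => j; rewrite teval_rename.
- by move=> p IH v; rewrite IH.
- by move=> p IHp q IHq v; rewrite IHp IHq.
- move=> i p IH v.
  have upd_rename a : upd v (r i) a \o r = upd (v \o r) i a.
    by apply: functional_extensionality => j; rewrite /upd /= (inj_eq inj_r).
  by split=> -[a Ha]; exists a; move: Ha; rewrite IH upd_rename.
Qed.

Fixpoint term_bound (t : term L) : nat :=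
  match t with
  | TVar i => i.+1
  | TZero => 0
  | TAdd a b => maxn (term_bound a) (term_bound b)
  | @TApp _ f ts => \max_j term_bound (ts j)
  end%N.

Fixpoint formula_bound (phi : formula L) : nat :=
  match phi with
  | FEq a b => maxn (term_bound a) (term_bound b)
  | FLt a b => maxn (term_bound a) (term_bound b)
  | @FRel _ R ts => \max_j term_bound (ts j)
  | FNot p => formula_bound p
  | FAnd p q => maxn (formula_bound p) (formula_bound q)
  | FEx i p => maxn i.+1 (formula_bound p)
  end%N.

Lemma teval_coincidence t v w : (forall i, (i < term_bound t)%N -> v i = w i) ->
  teval I v t = teval I w t.
Proof.
elim: t => //= [i H|a IHa b IHb H|f ts IH H]; first by rewrite H.
- by rewrite IHa ?IHb // => i Hi; apply: H; rewrite leq_max Hi ?orbT.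
- congr (ifun I _); apply: functional_extensionality => j; apply: IH => i Hi.
  by apply: H; apply: leq_trans Hi _; exact: (leq_bigmax j).
Qed.

Lemma agree_maxn (v w : nat -> M) a b :
  (forall i, (i < maxn a b)%N -> v i = w i) ->
  (forall i, (i < a)%N -> v i = w i) /\ (forall i, (i < b)%N -> v i = w i).
Proof. by move=> H; split=> i Hi; apply: H; rewrite leq_max Hi ?orbT. Qed.

Lemma sat_coincidence phi v w : (forall i, (i < formula_bound phi)%N -> v i = w i) ->
  sat lt I v phi <-> sat lt I w phi.
Proof.
elim: phi v w => /=.
- by move=> a b v w /agree_maxn [Ha Hb];
    rewrite (teval_coincidence Ha) (teval_coincidence Hb).
- by move=> a b v w /agree_maxn [Ha Hb];
    rewrite (teval_coincidence Ha) (teval_coincidence Hb).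
- move=> R ts v w H.
  suff -> : (fun j => teval I v (ts j)) = (fun j => teval I w (ts j)) by [].
  apply: functional_extensionality => j; apply: teval_coincidence => i Hi.
  by apply: H; apply: leq_trans Hi _; exact: (leq_bigmax j).
- by move=> p IH v w H; rewrite (IH v w H).
- by move=> p IHp q IHq v w /agree_maxn [Hp Hq]; rewrite (IHp v w Hp) (IHq v w Hq).
- move=> i p IH v w /agree_maxn [_ H].
  have E a : forall j, (j < formula_bound p)%N -> upd v i a j = upd w i a j.
    by move=> j Hj; rewrite /upd; case: eqP => // _; apply: H.
  by split=> -[a Ha]; exists a; move: Ha; rewrite (IH _ _ (E a)).
Qed.

(* Environments: [interleave v q] puts the variables v at the even indices and
   the parameters q at the odd ones, so that formulas can be combined without
   their parameters clashing. *)
Definition interleave (v q : nat -> M) : nat -> M :=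
  fun i => if odd i then q i./2 else v i./2.

Lemma interleave_even (v q : nat -> M) n : interleave v q n.*2 = v n.
Proof. by rewrite /interleave odd_double doubleK. Qed.
Lemma interleave_odd (v q : nat -> M) n : interleave v q n.*2.+1 = q n.
Proof. by rewrite /interleave /= odd_double uphalf_double. Qed.

Definition edefinable (P : (nat -> M) -> Prop) : Prop :=
  exists phi q, forall v, P v <-> sat lt I (interleave v q) phi.

Definition interleave_rename (f g : nat -> nat) (i : nat) : nat :=
  if odd i then (f i./2).*2.+1 else (g i./2).*2.

Lemma interleave_rename_inj f g :
  injective f -> injective g -> injective (interleave_rename f g).
Proof.
move=> hf hg i j; rewrite /interleave_rename.
case: (boolP (odd i)) => oi; case: (boolP (odd j)) => oj.
- case=> /double_inj /hf hij.
  by rewrite -[i]odd_double_half -[j]odd_double_half oi oj hij.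
- by move=> E; move: (odd_double (g j./2)); rewrite -E /= odd_double.
- by move=> E; move: (odd_double (g i./2)); rewrite E /= odd_double.
- move=> /double_inj /hg hij.
  by rewrite -[i]odd_double_half -[j]odd_double_half (negbTE oi) (negbTE oj) hij.
Qed.

Lemma sat_interleave_rename f g phi v q : injective f -> injective g ->
  sat lt I (interleave v q) (formula_rename (interleave_rename f g) phi) <->
  sat lt I (interleave (v \o g) (q \o f)) phi.
Proof.
move=> hf hg; rewrite sat_rename; last exact: interleave_rename_inj.
suff -> : interleave v q \o interleave_rename f g = interleave (v \o g) (q \o f) by [].
apply: functional_extensionality => i; rewrite /interleave /interleave_rename /=.
by case: (odd i); rewrite ?interleave_odd ?interleave_even /= ?odd_double
  ?uphalf_double ?doubleK.
Qed.

Lemma edef_ext P Q : (forall v, P v <-> Q v) -> edefinable P -> edefinable Q.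
Proof. by move=> H [phi [q Hq]]; exists phi, q => v; rewrite -H. Qed.

Lemma edef_sat phi q : edefinable (fun v => sat lt I (interleave v q) phi).
Proof. by exists phi, q. Qed.

Lemma edef_not P : edefinable P -> edefinable (fun v => ~ P v).
Proof. by move=> [phi [q Hq]]; exists (FNot phi), q => v /=; rewrite Hq. Qed.

(* Conjunction: the parameters of the two conjuncts go to the even and to the
   odd parameter slots respectively. *)
Lemma edef_and P Q : edefinable P -> edefinable Q -> edefinable (fun v => P v /\ Q v).
Proof.
move=> [phi1 [q1 H1]] [phi2 [q2 H2]].
have i1 : injective (fun j => j.*2) by exact: double_inj.
have i2 : injective (fun j => j.*2.+1) by move=> a b [] /double_inj.
exists (FAnd (formula_rename (interleave_rename (fun j => j.*2) id) phi1)
             (formula_rename (interleave_rename (fun j => j.*2.+1) id) phi2)).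
exists (interleave q1 q2) => v /=.
rewrite !sat_interleave_rename // H1 H2.
have -> : interleave q1 q2 \o (fun j => j.*2) = q1.
  by apply: functional_extensionality => j /=; rewrite interleave_even.
have -> : interleave q1 q2 \o (fun j => j.*2.+1) = q2.
  by apply: functional_extensionality => j /=; rewrite interleave_odd.
by [].
Qed.

Lemma edef_or P Q : edefinable P -> edefinable Q -> edefinable (fun v => P v \/ Q v).
Proof.
move=> HP HQ; apply: edef_ext (edef_not (edef_and (edef_not HP) (edef_not HQ))).
by move=> v; split; [tauto|move=> H; apply: NNPP; tauto].
Qed.

Lemma edef_rename (g : nat -> nat) P :
  injective g -> edefinable P -> edefinable (fun v => P (v \o g)).
Proof.
move=> hg [phi [q Hq]]; exists (formula_rename (interleave_rename id g) phi), q => v.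
by rewrite sat_interleave_rename //; apply: Hq.
Qed.

Lemma edef_ex j P : edefinable P -> edefinable (fun v => exists a, P (upd v j a)).
Proof.
move=> [phi [q Hq]]; exists (FEx j.*2 phi), q => v /=.
have E a : upd (interleave v q) j.*2 a = interleave (upd v j a) q.
  apply: functional_extensionality => i; rewrite /upd /interleave.
  case: (boolP (odd i)) => oi.
    by case: eqP => // Ei; move: oi; rewrite Ei odd_double.
  by rewrite -{1}[i]odd_double_half (negbTE oi) add0n (inj_eq double_inj).
by split=> -[a Ha]; exists a; [rewrite E -Hq | rewrite Hq -E].
Qed.

Lemma edef_eq i j : edefinable (fun v => v i = v j).
Proof.
apply: edef_ext (edef_sat (FEq (TVar L i.*2) (TVar L j.*2)) (fun _ => 0)) => v /=.
by rewrite !interleave_even.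
Qed.

Lemma edef_lt i j : edefinable (fun v => lt (v i) (v j)).
Proof.
apply: edef_ext (edef_sat (FLt (TVar L i.*2) (TVar L j.*2)) (fun _ => 0)) => v /=.
by rewrite !interleave_even.
Qed.

Lemma edef_pos i : edefinable (fun v => lt 0 (v i)).
Proof.
apply: edef_ext (edef_sat (FLt (TZero L) (TVar L i.*2)) (fun _ => 0)) => v /=.
by rewrite interleave_even.
Qed.

Lemma edef_abs_center i j c : edefinable (fun v => abs_lt lt (v i - c) (v j)).
Proof.
apply: edef_ext (edef_sat (FAnd (FLt (TVar L i.*2) (TAdd (TVar L j.*2) (TVar L 1)))
   (FLt (TVar L 1) (TAdd (TVar L j.*2) (TVar L i.*2)))) (fun _ => c)) => v /=.
by rewrite abs_lt_iff !interleave_even.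
Qed.

Lemma edef_abs_bound i j c : edefinable (fun v => abs_lt lt (v i - v j) c).
Proof.
apply: edef_ext (edef_sat (FAnd (FLt (TVar L i.*2) (TAdd (TVar L 1) (TVar L j.*2)))
   (FLt (TVar L j.*2) (TAdd (TVar L 1) (TVar L i.*2)))) (fun _ => c)) => v /=.
by rewrite abs_lt_iff !interleave_even.
Qed.

Lemma edef_of_definable n (X : ('I_n -> M) -> Prop) (sg : 'I_n -> nat) :
  injective sg -> definable lt I X -> edefinable (fun v => X (fun j => v (sg j))).
Proof.
move=> hsg [phi [k [p Hp]]].
pose se i := if @insub nat (fun x => (x < n)%N) 'I_n i is Some j then sg j else 0%N.
have hse i (Hi : (i < n)%N) : se i = sg (Ordinal Hi) by rewrite /se insubT.
pose r i := if (i < n)%N then (se i).*2 else ((i - n).*2).+1.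
have rinj : injective r.
  move=> i j; rewrite /r; case: ltnP => Hi; case: ltnP => Hj.
  - by move=> /double_inj; rewrite (hse _ Hi) (hse _ Hj) => /hsg [].
  - by move=> E; move: (odd_double (se i)); rewrite E /= odd_double.
  - by move=> E; move: (odd_double (se j)); rewrite -E /= odd_double.
  - by case=> /double_inj E; rewrite -(subnK Hi) -(subnK Hj) E.
exists (formula_rename r phi), (fun j => oapp p 0 (insub j)) => v.
rewrite sat_rename // Hp.
suff -> : env (fun j => v (sg j)) p = interleave v (fun j => oapp p 0 (insub j)) \o r by [].
apply: functional_extensionality => i; rewrite /env /r /=.
case: ltnP => Hi; first by rewrite interleave_even (hse _ Hi) insubT.
by rewrite interleave_odd insubF // ltnNge Hi.
Qed.

Lemma definable1_of_edef (X : M -> Prop) :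
  edefinable (fun v => X (v 0%N)) -> definable1 lt I X.
Proof.
move=> [phi [q Hq]].
exists phi, (formula_bound phi),
  (fun t : 'I_(formula_bound phi) => interleave (fun _ => 0) q t.+1) => x.
pose w := fun j : nat => if j == 0%N then x ord0 else 0.
rewrite /= (Hq w) /w /=.
apply: sat_coincidence => i Hi; rewrite /env.
case: i Hi => [|t] Ht.
  by rewrite /interleave /= insubT /=; congr x; apply: val_inj.
have Ht' : (t < formula_bound phi)%N := ltnW Ht.
rewrite insubF //= subn1 /= (insubT (fun i => (i < formula_bound phi)%N) Ht') /=.
rewrite /interleave; case: (boolP (odd t.+1)) => ot //.
by rewrite /w; case: eqP => // h; move: (odd_double_half t.+1); rewrite h (negbTE ot).
Qed.

Definition overwrite (v w : nat -> M) (J : seq nat) : nat -> M :=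
  fun i => if i \in J then w i else v i.

Lemma edef_ex_slots J P :
  edefinable P -> edefinable (fun v => exists w, P (overwrite v w J)).
Proof.
move=> HP; elim: J => [|j J IH].
  by apply: edef_ext HP => v; split; [move=> h; exists v|case].
apply: edef_ext (edef_ex j IH) => v; split.
- move=> [a [w Hw]]; exists (fun i => if i \in J then w i else a).
  suff -> : overwrite v (fun i => if i \in J then w i else a) (j :: J) =
            overwrite (upd v j a) w J by [].
  apply: functional_extensionality => i; rewrite /overwrite /upd in_cons.
  by case: (i \in J); case: eqP; rewrite ?orbT.
- move=> [w Hw]; exists (w j), w.
  suff <- : overwrite v w (j :: J) = overwrite (upd v j (w j)) w J by [].
  apply: functional_extensionality => i; rewrite /overwrite /upd in_cons.
  by case: (i \in J); case: eqP => [->|]; rewrite ?orbT.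
Qed.

(* Points x of M^m are stored in the environment slots 5, ..., m + 4; slot 0
   holds a radius and slots 1-4 are kept free for auxiliary variables. *)
Definition put_point m (v : nat -> M) (x : 'I_m -> M) : nat -> M :=
  fun i => match i with
           | (S (S (S (S (S j))))) => oapp x (v i) (insub j)
           | _ => v i end.

Lemma put_pointE m v (x : 'I_m -> M) (i : 'I_m) : put_point v x i.+4.+1 = x i.
Proof. by rewrite /put_point valK. Qed.

Lemma edef_ex_point m P :
  edefinable P -> edefinable (fun v => exists x : 'I_m -> M, P (put_point v x)).
Proof.
move=> /(edef_ex_slots [seq j.+4.+1 | j <- iota 0 m]); apply: edef_ext => v.
have E w : overwrite v w [seq j.+4.+1 | j <- iota 0 m] =
           put_point v (fun o : 'I_m => w o.+4.+1).
  apply: functional_extensionality => i; rewrite /overwrite /put_point.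
  case: i => [|[|[|[|[|j]]]]] //=; try by case: ifP => // /mapP [? _].
  have inj5 : injective (fun j : nat => j.+4.+1) by move=> a b [].
  rewrite (mem_map inj5) mem_iota add0n /=.
  by case: insubP => [u ->|/negbTE ->] //= ->.
split=> -[w Hw]; first by exists (fun o : 'I_m => w o.+4.+1); rewrite -E.
exists (put_point v w); rewrite E.
suff -> : (fun o : 'I_m => put_point v w o.+4.+1) = w by [].
by apply: functional_extensionality => o; rewrite put_pointE.
Qed.

Definition family_pred m (B : M -> ('I_m -> M) -> Prop) : (nat -> M) -> Prop :=
  fun v => B (v 0%N) (fun i : 'I_m => v i.+4.+1).

(* Exchanges slots 0 and 1, freeing slot 0 for the lower bound y. *)
Definition swap01 (i : nat) : nat :=
  if i == 0%N then 1%N else if i == 1%N then 0%N else i.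
Lemma swap01_inj : injective swap01.
Proof. by move=> a b; rewrite /swap01; case: a => [|[|a]]; case: b => [|[|b]]. Qed.

Lemma edef_eventual_lower_bounds m (B : M -> ('I_m -> M) -> Prop) (k : 'I_m) :
  edefinable (family_pred B) ->
  edefinable (fun v => exists r, lt 0 r /\ forall x, B r x -> le (v 0%N) (x k)).
Proof.
move=> HB.
have B1 : edefinable (fun v => B (v 1%N) (fun i => v i.+4.+1)).
  exact: edef_ext (edef_rename swap01_inj HB).
have above := edef_and B1 (edef_not (edef_or (edef_lt 0 k.+4.+1) (edef_eq 0 k.+4.+1))).
apply: edef_ext (edef_ex 1 (edef_and (edef_pos 1) (edef_not (edef_ex_point m above)))).
move=> v /=; rewrite /upd /=.
have E x : (fun i : 'I_m => oapp x (v i.+4.+1) (insub (val i))) = x.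
  by apply: functional_extensionality => i; rewrite valK.
split.
- move=> [r [hr Hn]]; exists r; split => // x Hx.
  by apply: NNPP => Hle; apply: Hn; exists x; rewrite E valK.
- move=> [r [hr H]]; exists r; split => //.
  by move=> [x []]; rewrite E valK /= => Hx []; apply: H.
Qed.

Lemma edef_family_graph m (C : ('I_m -> M) -> Prop) (s : M)
    (F : ('I_m -> M) -> M -> M) (p q : nat) :
  p != q -> (p < 5)%N -> (q < 5)%N -> definable_family lt I C s F ->
  edefinable (fun v => [/\ C (fun i => v i.+4.+1), lt 0 (v p), lt (v p) s
                         & v q = F (fun i => v i.+4.+1) (v p)]).
Proof.
move=> /eqP pq hp hq HF.
pose sg (j : 'I_(m + 2)) :=
  if (val j < m)%N then (val j).+4.+1 else if val j == m then p else q.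
have sg_inj : injective sg.
  move=> [a ha] [b hb]; rewrite /sg /= => E; apply: val_inj => /=; move: E.
  by case: (ltnP a m); case: (ltnP b m); case: (a =P m); case: (b =P m); lia.
apply: edef_ext (edef_of_definable sg_inj HF) => v /=.
have -> : (fun i : 'I_m => v (sg (lshift 2 i))) = (fun i => v i.+4.+1).
  by apply: functional_extensionality => i; rewrite /sg /= ltn_ord.
have -> : sg (rshift m ord0) = p by rewrite /sg /= addn0 ltnn eqxx.
have -> : sg (rshift m ord_max) = q.
  by rewrite /sg /= ifF ?ifF //; apply/negbTE; lia.
by [].
Qed.

Section Completeness.
Hypothesis Hdc : definably_complete lt I.

Definition nonempty_levels m (B : M -> ('I_m -> M) -> Prop) : Prop :=
  forall r, lt 0 r -> exists x, B r x.

Definition monotone_levels m (B : M -> ('I_m -> M) -> Prop) : Prop :=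
  forall r r' x, lt 0 r' -> le r' r -> B r' x -> B r x.

(* Let T be the set of y such that
   y <= x_k for all x in some B_r; by definable completeness T has a supremum
   c0, and every B_r contains a point whose k-th coordinate is r-close to c0. *)
Lemma cluster_coordinate m (B : M -> ('I_m -> M) -> Prop) (k : 'I_m) (R s0 : M) :
  lt 0 s0 -> edefinable (family_pred B) -> nonempty_levels B -> monotone_levels B ->
  (forall r x, B r x -> le (x k) R /\ le (- x k) R) ->
  exists c0, forall r, lt 0 r -> exists x, B r x /\ abs_lt lt (x k - c0) r.
Proof.
move=> hs0 HB Hne Hmo Hbd.
pose T y := exists r, lt 0 r /\ forall x, B r x -> le y (x k).
have T_ub y : T y -> le y R.
  move=> [r [hr H]]; case: (Hne r hr) => x Hx.
  by apply: le_trans (H x Hx) _; case: (Hbd _ _ Hx).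
have T_negR : T (- R).
  exists s0; split => // x Hx; case: (Hbd _ _ Hx) => _ h.
  by move: (le_opp h); rewrite opprK.
have HT : definable1 lt I T.
  exact/definable1_of_edef/(edef_eventual_lower_bounds k HB).
case: (Hdc HT) => [[T0|[Tunb|[c0 [c0_ub c0_least]]]] _].
- by case: (T0 _ T_negR).
- by case: (Tunb R) => y [/T_ub hy hRy]; case: (lt_not_le hRy hy).
exists c0 => r hr.
have [y [[r0 [hr0 Hr0]] hy]] : exists y, T y /\ lt (c0 - r) y.
  apply: NNPP => hn.
  have : le c0 (c0 - r).
    by apply: c0_least => y Ty; apply: not_lt => h; apply: hn; exists y.
  apply: lt_not_le; apply/(ltDr_iff _ _ r); rewrite subrK.
  by rewrite -{1}(add0r c0) addrC; apply: ltDl.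
case: (ex_min_pos hr hr0) => r' [hr' [h1 h2]].
have [x [Hx hx]] : exists x, B r' x /\ lt (x k) (c0 + r).
  apply: NNPP => hn.
  have : le (c0 + r) c0.
    apply: c0_ub; exists r'; split => // x Hx; apply: not_lt => h.
    by apply: hn; exists x.
  by apply: lt_not_le; rewrite -{1}(addr0 c0); exact: ltDl.
exists x; split; first exact: Hmo h1 Hx.
apply/abs_lt_iff; split; first by rewrite addrC.
have := lt_le_trans hy (Hr0 x (Hmo _ _ _ hr' h2 Hx)).
by move/(ltDr r); rewrite subrK addrC.
Qed.

(* The
   coordinates are fixed one at a time, shrinking the family accordingly. *)
Lemma definable_cluster_point m (B : M -> ('I_m -> M) -> Prop) (R s0 : M) :
  lt 0 s0 -> edefinable (family_pred B) -> nonempty_levels B -> monotone_levels B ->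
  (forall r x, B r x -> forall i, le (x i) R /\ le (- x i) R) ->
  exists c : 'I_m -> M, forall r, lt 0 r ->
    exists x, B r x /\ forall i, abs_lt lt (x i - c i) r.
Proof.
move=> hs0 HB Hne Hmo Hbd.
suff [c [B' [_ Hne' _ HB'B]]] : exists (c : 'I_m -> M) B',
  [/\ edefinable (family_pred B'), nonempty_levels B', monotone_levels B' &
      forall r x, B' r x -> B r x /\ forall i : 'I_m, abs_lt lt (x i - c i) r].
  by exists c => r hr; case: (Hne' r hr) => x Hx; exists x; apply: HB'B.
suff refine k : (k <= m)%N -> exists (c : 'I_m -> M) B',
  [/\ edefinable (family_pred B'), nonempty_levels B', monotone_levels B' &
      forall r x, B' r x -> B r x /\ forall i : 'I_m, (i < k)%N -> abs_lt lt (x i - c i) r].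
  case: (refine m (leqnn m)) => c [B' [HB' Hne' Hmo' HB'B]].
  by exists c, B'; split => // r x /HB'B [Bx Hx]; split => // i; apply: Hx.
elim: k => [|k IH] hk; first by exists (fun _ => 0), B; split => // r x h; split.
case: (IH (ltnW hk)) => c [B' [HB' Hne' Hmo' HB'B]].
pose k' : 'I_m := Ordinal hk.
have [c0 Hc0] : exists c0, forall r, lt 0 r -> exists x, B' r x /\ abs_lt lt (x k' - c0) r.
  apply: (cluster_coordinate (R := R) hs0 HB' Hne' Hmo').
  by move=> r x /HB'B [/Hbd Hx _]; apply: Hx.
exists (fun i => if i == k' then c0 else c i).
exists (fun r x => B' r x /\ abs_lt lt (x k' - c0) r); split.
- exact: edef_and HB' (edef_abs_center k'.+4.+1 0 c0).
- exact: Hc0.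
- by move=> r r' x hr' hle [Hx Ha]; split; [apply: Hmo' Hx|apply: abs_lt_le Ha hle].
- move=> r x [/HB'B [Bx Hx] Ha]; split => // i hi.
  case: eqP => [->|ne] //; apply: Hx.
  rewrite ltnS leq_eqVlt in hi; case/orP: hi => // /eqP hi.
  by case: ne; apply: val_inj.
Qed.
End Completeness.

Section Oscillation.
Variables (m : nat) (C : ('I_m -> M) -> Prop) (s : M) (F : ('I_m -> M) -> M -> M).

Definition oscillation_points (eps r : M) (x : 'I_m -> M) : Prop :=
  C x /\ exists t t', [/\ in_window s r t, in_window s r t' &
                          ~ abs_lt lt (F x t - F x t') eps].

Lemma oscillation_points_edef eps : definable_family lt I C s F ->
  edefinable (family_pred (oscillation_points eps)).
Proof.
move=> HF.
have graph1 := edef_family_graph (p := 1) (q := 3) isT isT isT HF.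
have graph2 := edef_family_graph (p := 2) (q := 4) isT isT isT HF.
have body := edef_and graph1 (edef_and graph2 (edef_and (edef_lt 1 0)
  (edef_and (edef_lt 2 0) (edef_not (edef_abs_bound 3 4 eps))))).
apply: edef_ext (edef_ex 1 (edef_ex 2 (edef_ex 3 (edef_ex 4 body)))) => v.
rewrite /upd /family_pred /oscillation_points /=; split.
- move=> [t [t' [y [y' [[Cx ht1 ht3 ->] [[_ ht1' ht3' ->] [ht2 [ht2' Hosc]]]]]]]].
  by split => //; exists t, t'.
- move=> [Cx [t [t' [[ht1 ht2 ht3] [ht1' ht2' ht3'] Hosc]]]].
  by exists t, t', (F (fun i => v i.+4.+1) t), (F (fun i => v i.+4.+1) t').
Qed.

Lemma oscillation_points_monotone eps : monotone_levels (oscillation_points eps).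
Proof.
move=> r r' x _ hle [Cx [t [t' [[ht1 ht2 ht3] [ht1' ht2' ht3'] Hosc]]]].
split => //; exists t, t'; split => //; split => //; exact: lt_le_trans hle.
Qed.

Lemma uniform_or_oscillation eps :
  (exists s', lt 0 s' /\ forall x t t', C x -> lt 0 t -> lt t s' -> lt t s ->
     lt 0 t' -> lt t' s' -> lt t' s -> abs_lt lt (F x t - F x t') eps) \/
  nonempty_levels (oscillation_points eps).
Proof.
case: (classic (nonempty_levels (oscillation_points eps))) => Hne; [by right|left].
apply: NNPP => Hunif; apply: Hne => r hr; apply: NNPP => Hr; apply: Hunif.
exists r; split => // x t t' Cx ht1 ht2 ht3 ht1' ht2' ht3'.
by apply: NNPP => Hosc; apply: Hr; exists x; split => //; exists t, t'.
Qed.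
End Oscillation.

End Definability.
End OrderedGroup.

Theorem mainTheorem1 (L : language) (M : zmodType) (lt : M -> M -> Prop)
  (I : interp L M)
  (HM : ordered_abelian_group lt)
  (Hdc : definably_complete lt I)
  (Hlom : locally_o_minimal lt I)
  (m : nat) (C : ('I_m -> M) -> Prop)
  (HCdef : definable lt I C) (HCcl : closed_set lt C) (HCbd : bounded_set lt C)
  (s : M) (Hs : lt 0 s)
  (F : ('I_m -> M) -> M -> M)
  (HFdef : definable_family lt I C s F)
  (HFpc : pointwise_convergent lt C s F)
  (HFeq : equicontinuous_family lt C s F) :
  uniformly_convergent lt C s F.
Proof.
move=> eps heps.
case: (uniform_or_oscillation lt C s F eps) => // Hne; exfalso.
have [R HR] := HCbd.
have [c Hc] : exists c : 'I_m -> M, forall r, lt 0 r ->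
    exists x, oscillation_points lt C s F eps r x /\ forall i, abs_lt lt (x i - c i) r.
  apply: (definable_cluster_point HM Hdc (R := R) Hs) => //.
  - exact: oscillation_points_edef HFdef.
  - exact: oscillation_points_monotone.
  - by move=> r x [Cx _]; apply: HR.
have Cc : C c.
  apply: (closed_cluster_point HM HCcl Hs) => r /Hc [x [[Cx _] Hx]].
  by exists x.
have [r [hr Hr]] := local_uniform_convergence HM HFpc HFeq heps Cc.
have [x [[Cx [t [t' [ht ht' Hosc]]]] Hx]] := Hc r hr.
by apply: Hosc; apply: Hr.
Qed.
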